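(* Let $\mathbf{u}$ be an $m$-dimensional unit vector with entries in $\mathcal{R}_{12}$. Then for any $0\le j\le m-1$ there exists a sequence $G_1,\ldots,G_q$ of one-level operators of type $\zeta_{12}$ and two-level operators of type $X$ and $H'$ such that $G_1\cdots G_q\mathbf{u}=\mathbf{e}_j$.
   Context: $\zeta_{12}=e^{2\pi i/12}$ and $\mathcal{R}_{12}$ is the smallest subring of $\mathbb{C}$ containing $1/2$ and $\zeta_{12}$. $\mathbf{e}_j$ is the $j$-th standard basis vector. $X=\begin{bmatrix}0&1\\1&0\end{bmatrix}$, $H'=\frac{1+i}{2}\begin{bmatrix}1&1\\1&-1\end{bmatrix}$. The one-level operator $c_{[j]}$ of type $c$ is the $m\times m$ identity with $(j,j)$ entry replaced by $c$; the two-level operator $M_{[j,j']}$ ($j<j'$) of type $M\in\mathrm{M}_2(\mathbb{C})$ is the $m\times m$ identity with entries at $(j,j),(j,j'),(j',j),(j',j')$ replaced by $M_{1,1},M_{1,2},M_{2,1},M_{2,2}$. *)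

(* complex numbers modelled by algC (algebraic complex numbers,
   a subfield of C containing all the numbers involved). *)
From HB Require Import structures.
From mathcomp Require Import all_boot all_order all_algebra all_field.
Set Implicit Arguments. Unset Strict Implicit. Unset Printing Implicit Defensive.
Import Order.TTheory GRing.Theory Num.Theory.
Local Open Scope ring_scope.

(* zeta_12 = e^{2 pi i/12} = cos(pi/6) + i sin(pi/6) = (sqrt 3 + i)/2 *)
Definition zeta12 : algC := (sqrtC 3%:R + 'i) / 2%:R.

(* R_12: smallest subring of C containing 1/2 and zeta_12 (inductive closure) *)
Inductive inR12 : algC -> Prop :=
| R12_one  : inR12 1
| R12_half : inR12 (2%:R)^-1
| R12_zeta : inR12 zeta12
| R12_add x y : inR12 x -> inR12 y -> inR12 (x + y)
| R12_opp x : inR12 x -> inR12 (- x)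
| R12_mul x y : inR12 x -> inR12 y -> inR12 (x * y).

Definition i0 : 'I_2 := ord0.
Definition i1 : 'I_2 := ord_max.

Definition Xmx : 'M[algC]_2 := \matrix_(r, s) (r != s)%:R.
Definition H'mx : 'M[algC]_2 :=
  \matrix_(r, s) ((1 + 'i) / 2%:R * (if (r == i1) && (s == i1) then -1 else 1)).

Definition onelevel (m : nat) (j : 'I_m) (c : algC) : 'M[algC]_m :=
  \matrix_(r, s) (if (r == j) && (s == j) then c else (r == s)%:R).

Definition twolevel (m : nat) (j j' : 'I_m) (M : 'M[algC]_2) : 'M[algC]_m :=
  \matrix_(r, s)
    (if (r == j) && (s == j) then M i0 i0
     else if (r == j) && (s == j') then M i0 i1
     else if (r == j') && (s == j) then M i1 i0
     else if (r == j') && (s == j') then M i1 i1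
     else (r == s)%:R).

Definition allowed_gate (m : nat) (G : 'M[algC]_m) : Prop :=
  (exists j : 'I_m, G = onelevel j zeta12) \/
  (exists (j j' : 'I_m), (j < j')%N /\ (G = twolevel j j' Xmx \/ G = twolevel j j' H'mx)).

Definition gate_prod (m : nat) (s : seq 'M[algC]_m) : 'M[algC]_m :=
  foldr (fun A B => A *m B) 1%:M s.

Definition basis_vec (m : nat) (j : 'I_m) : 'cV[algC]_m := \col_i (i == j)%:R.

From mathcomp Require Import all_boot all_order all_algebra all_field.
From mathcomp Require Import ring zify.
Import GRing.Theory Num.Theory.
Local Open Scope ring_scope.

(* Let delta = 1 + i = 1 + zeta12^3.  As 2 = -i delta^2, a column with entries
   in R_12 is v / delta^k for a column v over Z[zeta12].  For c in Z[zeta12],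
   |c|^2 = A(c) + sqrt 3 B(c) with integral quadratic forms A and B, so for a
   unit column the irrationality of sqrt 3 gives sum A(v_i) = 2^k and
   sum B(v_i) = 0.  If delta divides every v_i, then v / delta^k is
   (v / delta) / delta^(k-1).  Otherwise, as both sums are even while A(c) + B(c)
   is odd for c prime to delta, two entries v_p, v_q prime to delta have
   A(v_p) = A(v_q) mod 2; then v_p + zeta12^a v_q = 2 c for some a, and the phase
   zeta12^a on q followed by H' on (p, q) replaces them by delta c and
   delta (c - zeta12^a v_q), lowering the number of entries prime to delta.
   For k = 0, A is positive definite, so sum A(v_i) = 1 makes v a power of
   zeta12 times a basis vector, which X gates move to any e_j. *)

Definition sqrt3 : algC := sqrtC 3%:R.
Definition delta : algC := 1 + 'i.

Lemma sqrt3_sqr : sqrt3 ^+ 2 = 3%:R.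
Proof. exact: sqrtCK. Qed.

Lemma conj_sqrt3 : sqrt3^* = sqrt3.
Proof. by apply: conj_Creal; rewrite ger0_real // sqrtC_ge0 ler0n. Qed.

Lemma zeta12E : zeta12 = (sqrt3 + 'i) / 2%:R.
Proof. by []. Qed.

Lemma zeta12_cube : zeta12 ^+ 3 = 'i.
Proof. by rewrite zeta12E; field: sqrt3_sqr (@sqrCi algC). Qed.

Lemma zeta12_pow4 : zeta12 ^+ 4 = zeta12 ^+ 2 - 1.
Proof. by rewrite zeta12E; field: sqrt3_sqr (@sqrCi algC). Qed.

Lemma conj_zeta12 : zeta12^* = (sqrt3 - 'i) / 2%:R.
Proof. by rewrite zeta12E fmorph_div rmorphD /= conj_sqrt3 conjCi rmorph_nat. Qed.

Lemma normr_zeta12 : `|zeta12| = 1.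
Proof.
apply/eqP; rewrite -sqrp_eq1 // normCK conj_zeta12 zeta12E.
by apply/eqP; field: sqrt3_sqr (@sqrCi algC).
Qed.

Lemma normr_zeta12XM n (x : algC) : `|zeta12 ^+ n * x| = `|x|.
Proof. by rewrite normrM normrX normr_zeta12 expr1n mul1r. Qed.

Lemma delta_sqr : delta ^+ 2 = 2%:R * 'i.
Proof. by rewrite /delta; ring: (@sqrCi algC). Qed.

Lemma normr_delta_sqr : `|delta| ^+ 2 = 2%:R.
Proof. by rewrite normCK /delta rmorphD /= conjCi rmorph1; ring: (@sqrCi algC). Qed.

Lemma delta_neq0 : delta != 0.
Proof.
apply: contra_eq_neq normr_delta_sqr => ->.
by rewrite normr0 expr0n eq_sym pnatr_eq0.
Qed.

Lemma deltaX_neq0 n : delta ^+ n != 0.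
Proof. exact/expf_neq0/delta_neq0. Qed.

Record cycint := CycInt { ci0 : int; ci1 : int; ci2 : int; ci3 : int }.

Definition cyc_val (c : cycint) : algC :=
  (ci0 c)%:~R + (ci1 c)%:~R * zeta12 + (ci2 c)%:~R * zeta12 ^+ 2 + (ci3 c)%:~R * zeta12 ^+ 3.

Definition cyc_one := CycInt 1 0 0 0.
Definition cyc_zeta c := CycInt (- ci3 c) (ci0 c) (ci1 c + ci3 c) (ci2 c).
Definition cyc_add a b := CycInt (ci0 a + ci0 b) (ci1 a + ci1 b) (ci2 a + ci2 b) (ci3 a + ci3 b).
Definition cyc_opp a := CycInt (- ci0 a) (- ci1 a) (- ci2 a) (- ci3 a).
Definition cyc_sub a b := cyc_add a (cyc_opp b).
Definition cyc_scale (n : int) a := CycInt (n * ci0 a) (n * ci1 a) (n * ci2 a) (n * ci3 a).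
Definition cyc_mul a b :=
  cyc_add (cyc_add (cyc_scale (ci0 a) b) (cyc_scale (ci1 a) (cyc_zeta b)))
          (cyc_add (cyc_scale (ci2 a) (iter 2 cyc_zeta b)) (cyc_scale (ci3 a) (iter 3 cyc_zeta b))).
Definition cyc_delta c := cyc_add c (iter 3 cyc_zeta c).
Definition cyc_half c := CycInt (ci0 c %/ 2)%Z (ci1 c %/ 2)%Z (ci2 c %/ 2)%Z (ci3 c %/ 2)%Z.

Lemma cyc_val1 : cyc_val cyc_one = 1.
Proof. by rewrite /cyc_val /=; ring. Qed.

Lemma cyc_val_zeta c : cyc_val (cyc_zeta c) = zeta12 * cyc_val c.
Proof. by rewrite /cyc_val /= !rmorphD !rmorphN /=; ring: zeta12_pow4. Qed.

Lemma cyc_val_iter_zeta n c : cyc_val (iter n cyc_zeta c) = zeta12 ^+ n * cyc_val c.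
Proof. by elim: n => [|n IHn] /=; rewrite ?mul1r // cyc_val_zeta IHn exprS mulrA. Qed.

Lemma cyc_valD a b : cyc_val (cyc_add a b) = cyc_val a + cyc_val b.
Proof. by rewrite /cyc_val /= !rmorphD /=; ring. Qed.

Lemma cyc_valN a : cyc_val (cyc_opp a) = - cyc_val a.
Proof. by rewrite /cyc_val /= !rmorphN /=; ring. Qed.

Lemma cyc_valB a b : cyc_val (cyc_sub a b) = cyc_val a - cyc_val b.
Proof. by rewrite cyc_valD cyc_valN. Qed.

Lemma cyc_valZ n a : cyc_val (cyc_scale n a) = n%:~R * cyc_val a.
Proof. by rewrite /cyc_val /= !rmorphM /=; ring. Qed.

Lemma cyc_valM a b : cyc_val (cyc_mul a b) = cyc_val a * cyc_val b.
Proof. by rewrite !cyc_valD !cyc_valZ !cyc_val_iter_zeta cyc_val_zeta /cyc_val; ring. Qed.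

Lemma cyc_val_delta c : cyc_val (cyc_delta c) = delta * cyc_val c.
Proof. by rewrite cyc_valD cyc_val_iter_zeta zeta12_cube mulrDl mul1r. Qed.

Lemma cyc_val_iter_delta n c : cyc_val (iter n cyc_delta c) = delta ^+ n * cyc_val c.
Proof. by elim: n => [|n IHn] /=; rewrite ?mul1r // cyc_val_delta IHn exprS mulrA. Qed.

Lemma R12_cyc_frac x : inR12 x -> exists k c, x = cyc_val c / delta ^+ k.
Proof.
elim=> {x} [|||x y _ [k [a ->]] _ [l [b ->]]|x _ [k [a ->]]|x y _ [k [a ->]] _ [l [b ->]]].
- by exists 0%N, cyc_one; rewrite cyc_val1 expr0 divr1.
- (* 1 / 2 = zeta12^3 / delta^2 *)
  exists 2%N, (CycInt 0 0 0 1); rewrite delta_sqr /cyc_val /= zeta12_cube; field.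
  exact: neq0Ci.
- by exists 0%N, (CycInt 0 1 0 0); rewrite /cyc_val /= expr0 divr1; ring.
- exists (k + l)%N, (cyc_add (iter l cyc_delta a) (iter k cyc_delta b)).
  by rewrite cyc_valD !cyc_val_iter_delta exprD; field; rewrite !deltaX_neq0.
- by exists k, (cyc_opp a); rewrite cyc_valN mulNr.
- exists (k + l)%N, (cyc_mul a b).
  by rewrite cyc_valM exprD; field; rewrite !deltaX_neq0.
Qed.

Definition cyc_normA c : int :=
  ci0 c * ci0 c + ci1 c * ci1 c + ci2 c * ci2 c + ci3 c * ci3 c + ci0 c * ci2 c + ci1 c * ci3 c.
Definition cyc_normB c : int := ci0 c * ci1 c + ci1 c * ci2 c + ci2 c * ci3 c.

Lemma cyc_val_sqnorm c : `|cyc_val c| ^+ 2 = (cyc_normA c)%:~R + sqrt3 * (cyc_normB c)%:~R.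
Proof.
have conj_poly (a b c' d : int) (z : algC) :
    (a%:~R + b%:~R * z + c'%:~R * z ^+ 2 + d%:~R * z ^+ 3)^* =
    a%:~R + b%:~R * z^* + c'%:~R * z^* ^+ 2 + d%:~R * z^* ^+ 3.
  by rewrite !rmorphD !rmorphM !rmorph_int /=; ring.
rewrite normCK /cyc_val conj_poly conj_zeta12 /cyc_normA /cyc_normB !rmorphD !rmorphM zeta12E.
by field: sqrt3_sqr (@sqrCi algC).
Qed.

(* 4 A(c) = (2 c0 + c2)^2 + (2 c1 + c3)^2 + 3 c2^2 + 3 c3^2 *)
Lemma cyc_normA_ge0 c : 0 <= cyc_normA c.
Proof.
case: c => a b c d; rewrite /cyc_normA /=.
have := sqr_ge0 (2 * a + c); have := sqr_ge0 (2 * b + d).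
have := sqr_ge0 c; have := sqr_ge0 d; rewrite !expr2; nia.
Qed.

Lemma cyc_normA_eq0 c : cyc_normA c = 0 -> cyc_val c = 0.
Proof.
case: c => a b c d; rewrite /cyc_normA /cyc_val /= => A0.
have := sqr_ge0 (2 * a + c); have := sqr_ge0 (2 * b + d).
have := sqr_ge0 c; have := sqr_ge0 d; rewrite !expr2 => d2 c2 bd ac.
have [-> ->] : c = 0 /\ d = 0 by nia.
have [-> ->] : a = 0 /\ b = 0 by nia.
by rewrite !mul0r !addr0.
Qed.

Definition cyc_coords c : seq int := [:: ci0 c; ci1 c; ci2 c; ci3 c].

(* A(c) = 1 confines the coordinates to {-1, 0, 1}; the twelve solutions are the
   powers of zeta12. *)
Lemma cyc_normA_eq1 c : cyc_normA c = 1 -> exists n, zeta12 ^+ n * cyc_val c = 1.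
Proof.
move=> A1.
suff /hasP[n _ /eqP e] :
    has (fun n => cyc_coords (iter n cyc_zeta c) == cyc_coords cyc_one) (iota 0 12).
  exists n; rewrite -cyc_val_iter_zeta -cyc_val1.
  by case: (iter n cyc_zeta c) e => ? ? ? ? [-> -> -> ->].
move: A1; case: c => a b c d; rewrite /cyc_normA /= => A1.
have := sqr_ge0 (2 * a + c); have := sqr_ge0 (2 * b + d).
have := sqr_ge0 (2 * c + a); have := sqr_ge0 (2 * d + b).
have := sqr_ge0 a; have := sqr_ge0 b; have := sqr_ge0 c; have := sqr_ge0 d.
rewrite !expr2 => *.
have ha : a = -1 \/ a = 0 \/ a = 1 by nia.
have hb : b = -1 \/ b = 0 \/ b = 1 by nia.
have hc : c = -1 \/ c = 0 \/ c = 1 by nia.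
have hd : d = -1 \/ d = 0 \/ d = 1 by nia.
move: A1.
by case: ha => [->|[->|->]]; case: hb => [->|[->|->]]; case: hc => [->|[->|->]];
  case: hd => [->|[->|->]]; vm_compute; try discriminate.
Qed.

Lemma sqr_neq_3sqr (x y : nat) : (0 < y)%N -> (x * x != 3 * (y * y))%N.
Proof.
move=> y0; apply/eqP => e.
have x0 : (0 < x)%N by case: x e => [|x] //=; nia.
have := congr1 (logn 3) e.
by rewrite !lognM ?muln_gt0 ?x0 ?y0 // (logn_prime 3 (isT : prime 3)) eqxx; lia.
Qed.

Lemma sqrt3_irrational (a b n : int) :
  a%:~R + sqrt3 * b%:~R = n%:~R :> algC -> a = n /\ b = 0.
Proof.
move=> e.
have sqr_e : (n - a) * (n - a) = 3 * (b * b).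
  apply: (@intr_inj algC); rewrite !rmorphM rmorphB /= -e; ring: sqrt3_sqr.
have b0 : b = 0.
  apply/eqP; rewrite -absz_eq0 -leqn0 leqNgt; apply/negP => /(sqr_neq_3sqr `|n - a|%N)/negP.
  by apply; apply/eqP; have := congr1 absz sqr_e; rewrite !abszM.
by split=> //; move: e; rewrite b0 mulr0 addr0; exact: intr_inj.
Qed.

Definition oddz (x : int) : bool := (x %% 2)%Z != 0.

Lemma oddzD x y : oddz (x + y) = oddz x (+) oddz y.
Proof.
rewrite /oddz; case: (x %% 2 =P 0)%Z => ?; case: (y %% 2 =P 0)%Z => ?;
  case: ((x + y) %% 2 =P 0)%Z => ? //=; lia.
Qed.

Lemma oddzN x : oddz (- x) = oddz x.
Proof. by rewrite /oddz; case: (x %% 2 =P 0)%Z => ?; case: ((- x) %% 2 =P 0)%Z => ? //=; lia. Qed.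

Lemma oddzM x y : oddz (x * y) = oddz x && oddz y.
Proof.
rewrite /oddz; case: (x %% 2 =P 0)%Z => ?; case: (y %% 2 =P 0)%Z => ?;
  case: ((x * y) %% 2 =P 0)%Z => ? //=; nia.
Qed.

Lemma oddz_sum (I : finType) (F : I -> int) : oddz (\sum_i F i) = odd #|[set i | oddz (F i)]|.
Proof.
have -> : #|[set i | oddz (F i)]| = (\sum_i oddz (F i))%N.
  by rewrite -sum1_card big_mkcond /=; apply: eq_bigr => i _; rewrite inE; case: oddz.
elim/big_ind2: _ => // [x n y n' ex ey|i _]; first by rewrite oddzD oddD ex ey.
by case: oddz.
Qed.

Lemma evenz_halfK x : ~~ oddz x -> x = 2 * (x %/ 2)%Z.
Proof. by rewrite /oddz negbK => /eqP; lia. Qed.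

Definition parity4 := (bool * bool * bool * bool)%type.
Definition par_zero : parity4 := (false, false, false, false).
Definition cyc_par c : parity4 := (oddz (ci0 c), oddz (ci1 c), oddz (ci2 c), oddz (ci3 c)).
Definition par_zeta (b : parity4) : parity4 :=
  let: (b0, b1, b2, b3) := b in (b3, b0, b1 (+) b3, b2).
Definition par_add (a b : parity4) : parity4 :=
  let: (a0, a1, a2, a3) := a in let: (b0, b1, b2, b3) := b in
  (a0 (+) b0, a1 (+) b1, a2 (+) b2, a3 (+) b3).
Definition par_normA (b : parity4) : bool :=
  let: (b0, b1, b2, b3) := b in b0 (+) b1 (+) b2 (+) b3 (+) (b0 && b2) (+) (b1 && b3).
Definition par_normB (b : parity4) : bool :=
  let: (b0, b1, b2, b3) := b in (b0 && b1) (+) (b1 && b2) (+) (b2 && b3).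
(* The residue modulo delta: Z[zeta12]/(delta) = F_2[x]/(x^2 + x + 1), where x^3 = 1. *)
Definition par_coprime (b : parity4) : bool :=
  let: (b0, b1, b2, b3) := b in (b0 (+) b2 (+) b3) || (b1 (+) b2).

Definition delta_coprime c := par_coprime (cyc_par c).

Lemma cyc_par_iter_zeta n c : cyc_par (iter n cyc_zeta c) = iter n par_zeta (cyc_par c).
Proof. by elim: n => //= n <-; rewrite /cyc_par /= oddzN oddzD. Qed.

Lemma cyc_par_add a b : cyc_par (cyc_add a b) = par_add (cyc_par a) (cyc_par b).
Proof. by rewrite /cyc_par /= !oddzD. Qed.

Lemma cyc_par_sub a b : cyc_par (cyc_sub a b) = par_add (cyc_par a) (cyc_par b).
Proof. by rewrite cyc_par_add /cyc_par /= !oddzN. Qed.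

Lemma oddz_normA c : oddz (cyc_normA c) = par_normA (cyc_par c).
Proof. by rewrite /cyc_normA !oddzD !oddzM !andbb. Qed.

Lemma oddz_normB c : oddz (cyc_normB c) = par_normB (cyc_par c).
Proof. by rewrite /cyc_normB !oddzD !oddzM. Qed.

Lemma cyc_val_half c : cyc_par c = par_zero -> cyc_val c = 2%:R * cyc_val (cyc_half c).
Proof.
case: c => a b c d [/negbT ea /negbT eb /negbT ec /negbT ed].
rewrite /cyc_val /= {1}(evenz_halfK _ ea) {1}(evenz_halfK _ eb) {1}(evenz_halfK _ ec).
by rewrite {1}(evenz_halfK _ ed) !rmorphM /=; ring.
Qed.

Lemma delta_coprime_normAB c : delta_coprime c -> oddz (cyc_normA c + cyc_normB c).
Proof.
rewrite oddzD oddz_normA oddz_normB /delta_coprime.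
by case: (cyc_par c) => [[[[] []] []] []].
Qed.

Lemma delta_dvd_normA c : ~~ delta_coprime c -> ~~ oddz (cyc_normA c).
Proof. by rewrite oddz_normA /delta_coprime; case: (cyc_par c) => [[[[] []] []] []]. Qed.

Lemma delta_dvd_normB c : ~~ delta_coprime c -> ~~ oddz (cyc_normB c).
Proof. by rewrite oddz_normB /delta_coprime; case: (cyc_par c) => [[[[] []] []] []]. Qed.

Lemma delta_coprime_delta c : ~~ delta_coprime (cyc_delta c).
Proof.
rewrite /delta_coprime /cyc_delta cyc_par_add cyc_par_iter_zeta.
by case: (cyc_par c) => [[[[] []] []] []].
Qed.

(* c / delta = c (1 - i) / 2 *)
Definition cyc_div_delta c := cyc_half (cyc_sub c (iter 3 cyc_zeta c)).

Lemma cyc_val_div_delta c :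
  ~~ delta_coprime c -> cyc_val c = delta * cyc_val (cyc_div_delta c).
Proof.
move=> ndvd_c.
have e : cyc_val c - 'i * cyc_val c = 2%:R * cyc_val (cyc_div_delta c).
  rewrite -zeta12_cube -cyc_val_iter_zeta -cyc_valB; apply: cyc_val_half.
  move: ndvd_c; rewrite cyc_par_sub cyc_par_iter_zeta /delta_coprime.
  by case: (cyc_par c) => [[[[] []] []] []].
apply: (@mulfI _ 2%:R); first by rewrite pnatr_eq0.
by rewrite mulrCA -e /delta; ring: (@sqrCi algC).
Qed.

Lemma delta_coprime_pair x y : delta_coprime x -> delta_coprime y ->
  oddz (cyc_normA x) = oddz (cyc_normA y) ->
  exists a c, cyc_val x + zeta12 ^+ a * cyc_val y = 2%:R * cyc_val c.
Proof.
rewrite !oddz_normA /delta_coprime => cop_x cop_y eqA.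
suff [a xy0] : exists a, par_add (cyc_par x) (iter a par_zeta (cyc_par y)) = par_zero.
  exists a, (cyc_half (cyc_add x (iter a cyc_zeta y))).
  rewrite -cyc_val_iter_zeta -cyc_valD; apply: cyc_val_half.
  by rewrite cyc_par_add cyc_par_iter_zeta.
move: (cyc_par x) (cyc_par y) cop_x cop_y eqA => [[[[] []] []] []] [[[[] []] []] []] //= _ _ _;
  first [ by exists 0%N | by exists 1%N | by exists 2%N
        | by exists 3%N | by exists 4%N | by exists 5%N ].
Qed.

Lemma even_card_neq (T : finType) (A : {set T}) x : x \in A -> ~~ odd #|A| ->
  exists2 y, y \in A & y != x.
Proof.
move=> Ax; rewrite (cardsD1 x) Ax /= negbK => odd_Ax.
have /set0Pn[y] : A :\ x != set0 by rewrite -card_gt0; case: #|A :\ x| odd_Ax.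
by rewrite in_setD1 => /andP[yx Ay]; exists y.
Qed.

Lemma int_sum_eq1 (I : finType) (F : I -> int) :
  (forall i, 0 <= F i) -> \sum_i F i = 1 ->
  exists i0, F i0 = 1 /\ forall i, i != i0 -> F i = 0.
Proof.
move=> F_ge0 sum1.
have [i0 Fi0] : exists i0, F i0 != 0.
  apply/existsP; apply: contra_eqT sum1 => /existsPn F0.
  by rewrite big1 // => i _; apply/eqP; rewrite -[_ == _]negbK F0.
have rest_ge0 : 0 <= \sum_(i | i != i0) F i by apply: sumr_ge0.
have [rest0 F1] : \sum_(i | i != i0) F i = 0 /\ F i0 = 1.
  move: sum1 (F_ge0 i0) Fi0 rest_ge0.
  (* [set] makes the two occurrences of the remaining sum one atom for lia *)
  by rewrite (bigD1 i0) //=; set rest := \sum_(i | _) _; move: rest; lia.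
by exists i0; split=> // i; apply: (psumr_eq0P (fun i _ => F_ge0 i) rest0).
Qed.

Section Columns.

Local Set Implicit Arguments.
Local Unset Strict Implicit.

Variable m : nat.

Definition reachable (u v : 'cV[algC]_m) : Prop :=
  exists s : seq 'M[algC]_m, (forall G, G \in s -> allowed_gate G) /\ gate_prod s *m u = v.

Lemma gate_prod_cat (s1 s2 : seq 'M[algC]_m) :
  gate_prod (s1 ++ s2) = gate_prod s1 *m gate_prod s2.
Proof. by elim: s1 => [|A s1 IHs] /=; rewrite ?mul1mx // IHs mulmxA. Qed.

Lemma reachable_refl (u : 'cV[algC]_m) : reachable u u.
Proof. by exists [::]; rewrite /= mul1mx. Qed.

Lemma reachable_trans (u v w : 'cV[algC]_m) : reachable u v -> reachable v w -> reachable u w.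
Proof.
move=> [s1 [gs1 <-]] [s2 [gs2 <-]]; exists (s2 ++ s1); split.
  by move=> G; rewrite mem_cat => /orP[/gs2|/gs1].
by rewrite gate_prod_cat mulmxA.
Qed.

Lemma reachable_gate (G : 'M[algC]_m) u : allowed_gate G -> reachable u (G *m u).
Proof. by move=> gG; exists [:: G]; split=> [H /[!inE]/eqP->|] //=; rewrite mulmx1. Qed.

Lemma sumD2 (F : 'I_m -> algC) p q : p != q ->
  \sum_i F i = F p + F q + \sum_(i | (i != p) && (i != q)) F i.
Proof. by move=> pq; rewrite (bigD1 p) //= (bigD1 q) 1?eq_sym // addrA. Qed.

Lemma onelevel_mulmx (j : 'I_m) c (u : 'cV[algC]_m) :
  onelevel j c *m u = \col_i (if i == j then c * u i 0 else u i 0).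
Proof.
apply/matrixP => i k; rewrite (ord1 k) !mxE (big_only1 i) // => [|r ri _]; rewrite mxE.
  by rewrite eqxx andbb; case: eqP; rewrite ?mul1r.
have [<-|ij] := eqVneq i j; first by rewrite /= (negbTE ri) eq_sym (negbTE ri) mul0r.
by rewrite /= eq_sym (negbTE ri) mul0r.
Qed.

Lemma twolevel_mulmx (p q : 'I_m) M (u : 'cV[algC]_m) : p != q ->
  twolevel p q M *m u =
  \col_i (if i == p then M i0 i0 * u p 0 + M i0 i1 * u q 0
          else if i == q then M i1 i0 * u p 0 + M i1 i1 * u q 0 else u i 0).
Proof.
move=> pq; have qp : q != p by rewrite eq_sym.
apply/matrixP => i k; rewrite (ord1 k) !mxE.
have [->|ip] := eqVneq i p.
  rewrite (sumD2 _ pq) big1 => [|r /andP[rp rq]]; rewrite !mxE ?eqxx ?(negbTE pq) ?(negbTE qp) /=.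
    by rewrite addr0.
  by rewrite (negbTE rp) (negbTE rq) eq_sym (negbTE rp) mul0r.
have [->|iq] := eqVneq i q.
  rewrite (sumD2 _ pq) big1 => [|r /andP[rp rq]]; rewrite !mxE ?eqxx ?(negbTE pq) ?(negbTE qp) /=.
    by rewrite addr0.
  by rewrite (negbTE rp) (negbTE rq) eq_sym (negbTE rq) mul0r.
rewrite (big_only1 i) // => [|r ri _]; rewrite mxE (negbTE ip) (negbTE iq) /=.
  by rewrite eqxx mul1r.
by rewrite eq_sym (negbTE ri) mul0r.
Qed.

Definition col_phase (q : 'I_m) (a : nat) (u : 'cV[algC]_m) : 'cV[algC]_m :=
  \col_i (if i == q then zeta12 ^+ a * u i 0 else u i 0).

Definition col_swap (p q : 'I_m) (u : 'cV[algC]_m) : 'cV[algC]_m :=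
  \col_i (if i == p then u q 0 else if i == q then u p 0 else u i 0).

Definition col_hadamard (p q : 'I_m) (u : 'cV[algC]_m) : 'cV[algC]_m :=
  \col_i (if i == p then delta / 2%:R * (u p 0 + u q 0)
          else if i == q then delta / 2%:R * (u p 0 - u q 0) else u i 0).

Lemma reachable_phase (q : 'I_m) a u : reachable u (col_phase q a u).
Proof.
elim: a => [|a IHa].
  suff -> : col_phase q 0 u = u by apply: reachable_refl.
  by apply/matrixP => i k; rewrite (ord1 k) mxE mul1r if_same.
apply: (reachable_trans IHa).
have -> : col_phase q a.+1 u = onelevel q zeta12 *m col_phase q a u.
  by rewrite onelevel_mulmx; apply/matrixP => i k; rewrite !mxE; case: eqP; rewrite // exprS mulrA.
by apply: reachable_gate; left; exists q.
Qed.

Lemma reachable_swap (p q : 'I_m) u : p != q -> reachable u (col_swap p q u).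
Proof.
wlog pq : p q / (p < q)%N => [swap_lt|_].
  move=> npq; case: (ltngtP p q) => [/swap_lt|qp|/val_inj pq]; [exact|..|by rewrite pq eqxx in npq].
  have -> : col_swap p q u = col_swap q p u.
    apply/matrixP => i k; rewrite !mxE.
    by case: (eqVneq i p) => [->|//]; rewrite (negbTE npq).
  by apply: swap_lt; rewrite // eq_sym.
have -> : col_swap p q u = twolevel p q Xmx *m u.
  rewrite twolevel_mulmx ?neq_ltn ?pq //; apply/matrixP => i k; rewrite !mxE /=.
  by rewrite !mul0r !mul1r add0r addr0.
by apply: reachable_gate; right; exists p, q; split => //; left.
Qed.

Lemma reachable_hadamard (p q : 'I_m) u : (p < q)%N -> reachable u (col_hadamard p q u).
Proof.
move=> pq; have -> : col_hadamard p q u = twolevel p q H'mx *m u.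
  rewrite twolevel_mulmx ?neq_ltn ?pq //; apply/matrixP => i k; rewrite !mxE /= /delta.
  by case: ifP => _; last case: ifP => _; rewrite //; ring.
by apply: reachable_gate; right; exists p, q; split => //; right.
Qed.

Lemma reachable_basis (i j : 'I_m) : reachable (basis_vec i) (basis_vec j).
Proof.
have [->|ij] := eqVneq i j; first exact: reachable_refl.
rewrite (_ : basis_vec j = col_swap i j (basis_vec i)); first exact: reachable_swap.
apply/matrixP => r k; rewrite !mxE eqxx.
have [->|ri] := eqVneq r i; first by rewrite eq_sym.
by case: (r == j).
Qed.

Definition sqnorm (u : 'cV[algC]_m) : algC := \sum_i `|u i 0| ^+ 2.

Lemma sqnorm_phase (q : 'I_m) a u : sqnorm (col_phase q a u) = sqnorm u.
Proof. by apply: eq_bigr => i _; rewrite mxE; case: eqP; rewrite ?normr_zeta12XM. Qed.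

Lemma sqnorm_hadamard (p q : 'I_m) u : p != q -> sqnorm (col_hadamard p q u) = sqnorm u.
Proof.
move=> pq; have qp : q != p by rewrite eq_sym.
rewrite /sqnorm [LHS](sumD2 _ pq) [RHS](sumD2 _ pq).
congr (_ + _); last by apply: eq_bigr => i /andP[ip iq]; rewrite mxE (negbTE ip) (negbTE iq).
rewrite !mxE !eqxx (negbTE qp) !normrM !exprMn normr_delta_sqr !normCK.
by rewrite !rmorphD !rmorphN fmorphV rmorph_nat; field.
Qed.

Definition cyc_col (k : nat) (v : 'I_m -> cycint) : 'cV[algC]_m :=
  \col_i (cyc_val (v i) / delta ^+ k).

Definition coprime_set (v : 'I_m -> cycint) : {set 'I_m} := [set i | delta_coprime (v i)].

Lemma sqnorm_cyc_col k v :
  \sum_i `|cyc_val (v i)| ^+ 2 = 2%:R ^+ k * sqnorm (cyc_col k v).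
Proof.
rewrite mulr_sumr; apply: eq_bigr => i _.
rewrite mxE normrM normfV normrX exprMn exprVn -exprM mulnC exprM normr_delta_sqr.
by rewrite mulrCA mulfV ?mulr1 // expf_neq0 // pnatr_eq0.
Qed.

Lemma cyc_col_normAB k v : sqnorm (cyc_col k v) = 1 ->
  \sum_i cyc_normA (v i) = 2 ^+ k /\ \sum_i cyc_normB (v i) = 0.
Proof.
move=> unit_v; apply: sqrt3_irrational; rewrite !rmorph_sum mulr_sumr -big_split /= rmorphXn.
by rewrite -(eq_bigr _ (fun i _ => cyc_val_sqnorm (v i))) (sqnorm_cyc_col k) unit_v mulr1.
Qed.

Lemma reachable_cyc_col0 v j : sqnorm (cyc_col 0 v) = 1 -> reachable (cyc_col 0 v) (basis_vec j).
Proof.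
move=> /cyc_col_normAB[sumA _].
have [i0 [A1 A0]] := int_sum_eq1 _ _ (fun i => cyc_normA_ge0 (v i)) sumA.
have [n zn1] := cyc_normA_eq1 _ A1.
suff phase_v : col_phase i0 n (cyc_col 0 v) = basis_vec i0.
  by apply: reachable_trans (reachable_phase i0 n _) _; rewrite phase_v; apply: reachable_basis.
apply/matrixP => i k; rewrite !mxE expr0 divr1.
have [->|ii0] := eqVneq i i0; first exact: zn1.
exact: cyc_normA_eq0 _ (A0 _ ii0).
Qed.

Lemma cyc_col_div_delta k v : coprime_set v = set0 ->
  cyc_col k.+1 v = cyc_col k (fun i => cyc_div_delta (v i)).
Proof.
move=> cop0; apply/matrixP => i j; rewrite !mxE.
have ndvd_vi : ~~ delta_coprime (v i).
  by apply: contraTN isT => cop_vi; have := in_set0 i; rewrite -cop0 inE cop_vi.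
by rewrite {1}(cyc_val_div_delta _ ndvd_vi) exprSr; field; rewrite deltaX_neq0 delta_neq0.
Qed.

Lemma coprime_pair k v : sqnorm (cyc_col k.+1 v) = 1 -> coprime_set v != set0 ->
  exists p q : 'I_m, [/\ (p < q)%N, delta_coprime (v p), delta_coprime (v q)
                & oddz (cyc_normA (v p)) = oddz (cyc_normA (v q))].
Proof.
move=> /cyc_col_normAB[sumA sumB] /set0Pn[p]; rewrite inE => cop_p.
suff [q [cop_q qp eqA]] : exists q, [/\ delta_coprime (v q), q != p
                                    & oddz (cyc_normA (v p)) = oddz (cyc_normA (v q))].
  case: (ltngtP p q) => [pq|qp'|/val_inj pq]; first by exists p, q.
    by exists q, p.
  by rewrite pq eqxx in qp.
have evenA : ~~ odd #|[set i | oddz (cyc_normA (v i))]| by rewrite -oddz_sum sumA exprS oddzM.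
have evenB : ~~ odd #|[set i | oddz (cyc_normB (v i))]| by rewrite -oddz_sum sumB.
have oddAB_p := delta_coprime_normAB _ cop_p; rewrite oddzD in oddAB_p.
case oddA_p : (oddz (cyc_normA (v p))) in oddAB_p *.
  have [|q] := @even_card_neq _ _ p _ evenA; first by rewrite inE oddA_p.
  rewrite inE => oddA_q qp; exists q; split => //.
  by apply: contraLR oddA_q; apply: delta_dvd_normA.
have [|q] := @even_card_neq _ _ p _ evenB; first by rewrite inE.
rewrite inE => oddB_q qp.
have cop_q : delta_coprime (v q) by apply: contraLR oddB_q; apply: delta_dvd_normB.
exists q; split => //.
by have := delta_coprime_normAB _ cop_q; rewrite oddzD oddB_q; case: oddz.
Qed.

Lemma hadamard_step k (v : 'I_m -> cycint) (p q : 'I_m) :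
  (p < q)%N -> delta_coprime (v p) -> delta_coprime (v q) ->
  oddz (cyc_normA (v p)) = oddz (cyc_normA (v q)) ->
  exists a (v' : 'I_m -> cycint), cyc_col k v' = col_hadamard p q (col_phase q a (cyc_col k v))
            /\ (#|coprime_set v'| < #|coprime_set v|)%N.
Proof.
move=> pq cop_p cop_q eqA; have npq : p != q by rewrite neq_ltn pq.
have [a [c sum_c]] := delta_coprime_pair _ _ cop_p cop_q eqA.
have vpE : cyc_val (v p) = 2%:R * cyc_val c - zeta12 ^+ a * cyc_val (v q) by rewrite -sum_c addrK.
pose y := iter a cyc_zeta (v q).
pose v' i := if i == p then cyc_delta c else if i == q then cyc_delta (cyc_sub c y) else v i.
exists a, v'; split.
  apply/matrixP => i j; rewrite !mxE eqxx (negbTE npq) /v'.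
  case: ifP => _; last case: ifP => // _.
    by rewrite cyc_val_delta vpE /delta; field; rewrite deltaX_neq0.
  by rewrite cyc_val_delta cyc_valB cyc_val_iter_zeta vpE /delta; field; rewrite deltaX_neq0.
apply/proper_card/properP; split.
  apply/subsetP => i; rewrite !inE /v'.
  by case: ifP => _; [|case: ifP => _ //]; rewrite (negbTE (delta_coprime_delta _)).
by exists p; rewrite !inE // /v' eqxx (negbTE (delta_coprime_delta _)).
Qed.

Lemma reachable_cyc_col k (v : 'I_m -> cycint) j :
  sqnorm (cyc_col k v) = 1 -> reachable (cyc_col k v) (basis_vec j).
Proof.
elim: k v => [|k IHk] v unit_v; first exact: reachable_cyc_col0.
have [n] := ubnP #|coprime_set v|; elim: n => // n IHn in v unit_v *; rewrite ltnS => le_vn.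
have [cop0|/(coprime_pair unit_v)[p [q [pq cop_p cop_q eqA]]]] := eqVneq (coprime_set v) set0.
  by rewrite (cyc_col_div_delta k cop0) in unit_v *; apply: IHk.
have [a [v' [v'E lt_v']]] := hadamard_step k.+1 pq cop_p cop_q eqA.
apply: reachable_trans (reachable_phase q a _) _.
apply: reachable_trans (reachable_hadamard _ pq) _.
rewrite -v'E; apply: IHn; last exact: leq_trans lt_v' le_vn.
by rewrite v'E sqnorm_hadamard ?neq_ltn ?pq // sqnorm_phase.
Qed.

Lemma R12_cyc_col (u : 'cV[algC]_m) : (forall i, inR12 (u i 0)) -> exists k v, u = cyc_col k v.
Proof.
move=> R12u; have /fin_all_exists[k /fin_all_exists[c uE]] := fun i => R12_cyc_frac _ (R12u i).
pose K := (\sum_i k i)%N.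
exists K, (fun i => iter (K - k i) cyc_delta (c i)).
apply/matrixP => i j; rewrite (ord1 j) !mxE uE cyc_val_iter_delta.
have le_k : (k i <= K)%N by rewrite /K (bigD1 i) //= leq_addr.
by rewrite -{2}(subnK le_k) exprD; field; rewrite !deltaX_neq0.
Qed.

End Columns.

Theorem lemma7p5 (m : nat) (u : 'cV[algC]_m)
  (hunit : \sum_(i < m) `|u i 0| ^+ 2 = 1)
  (hR12 : forall i : 'I_m, inR12 (u i 0)) :
  forall j : 'I_m, exists s : seq 'M[algC]_m,
    (forall G : 'M[algC]_m, G \in s -> allowed_gate G) /\ (gate_prod s *m u = basis_vec j).
Proof.
move=> j; have [k [v uE]] := R12_cyc_col hR12.
by move: hunit; rewrite uE; apply: reachable_cyc_col.
Qed.
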